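(* For every $u\in L_{\mathrm{up}}$, the set $F_u$ is $2$-thin, i.e. every vertex $v\in V$ lies in $V_\ell$ for at most two links $\ell\in F_u$.
   Context: Let $(G=(V,E),L,w)$ be a WTAP instance (spanning tree $G$, links $L\subseteq\binom V2$, weights $w>0$) with a fixed root $r\in V$, and let $F\subseteq L$ be a WTAP solution, i.e. $\bigcup_{\ell\in F}P_\ell=E$, where $P_\ell$ is the edge set of the tree path between the endpoints of $\ell$ and $V_\ell$ its vertex set. Ancestors of $v$ are the vertices on the $r$-$v$ path in $G$ (including $r$ and $v$); descendants are defined reciprocally. $\mathrm{apex}(\ell)$ is the vertex of $V_\ell$ closest to $r$. An up-link is a link $\{t,b\}$ with $t$ an ancestor of $b$; $L_{\mathrm{up}}$ is the set of up-links. For $v\in V$ let $B_v=\{\ell\in F\colon\mathrm{apex}(\ell)\text{ is a descendant of }v\}$. For an up-link $u=\{t,b\}$ with $t$ an ancestor of $b$, let $v_u$ be the ancestor of $t$ farthest from $r$ such that $P_u\subseteq\bigcup_{\ell\in B_{v_u}}P_\ell$, and fix $F_u\subseteq B_{v_u}$ inclusion-wise minimal with $P_u\subseteq\bigcup_{\ell\in F_u}P_\ell$. *)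

From mathcomp Require Import all_boot.
Set Implicit Arguments. Unset Strict Implicit. Unset Printing Implicit Defensive.

Section WTAP.
Variable T : finType.
Variable e : rel T.

Definition tpath (x y : T) (p : seq T) : bool :=
  [&& path e x p, last x p == y & uniq (x :: p)].

Definition is_tree : Prop :=
  [/\ symmetric e, irreflexive e & forall x y, exists! p, tpath x y p].

Definition onVpath (x y z : T) : Prop :=
  exists p, tpath x y p /\ z \in x :: p.

Definition onEpath (x y a b : T) : Prop :=
  exists p, tpath x y p /\
    ((a, b) \in zip (x :: p) p \/ (b, a) \in zip (x :: p) p).

(* links are 2-element vertex sets; V_l and P_l *)
Definition link_V (l : {set T}) (z : T) : Prop :=
  exists x y, l = [set x; y] /\ onVpath x y z.
Definition link_E (l : {set T}) (a b : T) : Prop :=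
  exists x y, l = [set x; y] /\ onEpath x y a b.

Definition is_link_set (L : {set {set T}}) : Prop :=
  forall l, l \in L -> #|l| = 2.

Variable r : T.

Definition ancestor (a v : T) : Prop := onVpath r v a.

Definition depth_le (a b : T) : Prop :=
  forall p q, tpath r a p -> tpath r b q -> size p <= size q.

Definition is_apex (l : {set T}) (a : T) : Prop :=
  link_V l a /\ forall z, link_V l z -> depth_le a z.

Definition in_B (F : {set {set T}}) (v : T) (l : {set T}) : Prop :=
  l \in F /\ exists a, is_apex l a /\ ancestor v a.

Definition covered_by (Fs : {set T} -> Prop) (u : {set T}) : Prop :=
  forall a b, link_E u a b -> exists l, Fs l /\ link_E l a b.

Definition wtap_solution (L F : {set {set T}}) : Prop :=
  F \subset L /\ forall a b, e a b -> exists l, l \in F /\ link_E l a b.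

Definition is_vu (F : {set {set T}}) (t : T) (u : {set T}) (v : T) : Prop :=
  [/\ ancestor v t, covered_by (in_B F v) u &
      forall v', ancestor v' t -> covered_by (in_B F v') u -> depth_le v' v].

Definition is_Fu (F : {set {set T}}) (u : {set T}) (v : T)
  (Fu : {set {set T}}) : Prop :=
  [/\ forall l, l \in Fu -> in_B F v l,
      covered_by (fun l => l \in Fu) u &
      forall Fu' : {set {set T}}, Fu' \proper Fu -> ~ covered_by (fun l => l \in Fu') u].

Definition two_thin (Fu : {set {set T}}) : Prop :=
  forall z l1 l2 l3, l1 \in Fu -> l2 \in Fu -> l3 \in Fu ->
    l1 != l2 -> l1 != l3 -> l2 != l3 ->
    ~ [/\ link_V l1 z, link_V l2 z & link_V l3 z].

End WTAP.

From mathcomp Require Import all_boot zify.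
From Stdlib Require Import Classical.

(* Minimality of F_u gives every link of F_u a private edge of P_u, covered by
   no other link of F_u; nothing else about F_u, L, the root or v_u is used.
   If three links of F_u shared a vertex z, let f be the private edge lying
   between the other two along P_u.  The two outer links do not cover f, so in
   the tree with f deleted each of them still joins z to its own private edge,
   i.e. to either side of f.  Then the endpoints of P_u stay connected in G - f,
   although f lies on their unique tree path. *)

Set Implicit Arguments.
Unset Strict Implicit.
Unset Printing Implicit Defensive.

Lemma connect_nth (T : finType) (R : rel T) (x0 : T) (s : seq T) (i k : nat) :
  i <= k -> (forall m, i <= m < k -> R (nth x0 s m) (nth x0 s m.+1)) ->
  connect R (nth x0 s i) (nth x0 s k).
Proof.
elim: k => [|k IHk]; first by rewrite leqn0 => /eqP->.
rewrite leq_eqVlt ltnS => /orP[/eqP-> _ //|ik] Rs.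
by apply: connect_trans (IHk ik _) (connect1 (Rs k _)) => [m im|]; [apply: Rs|]; lia.
Qed.

Lemma mem_zip_nth (T : eqType) (x0 x : T) (p : seq T) (a c : T) :
  (a, c) \in zip (x :: p) p <->
  exists2 m, m < size p & a = nth x0 (x :: p) m /\ c = nth x0 (x :: p) m.+1.
Proof.
elim: p x => [|y p IHp] x /=; first by split=> // -[].
rewrite in_cons xpair_eqE; split.
- case/orP=> [/andP[/eqP-> /eqP->]|/IHp[m mp amc]]; first by exists 0.
  by exists m.+1.
- case=> -[_ [-> ->]|m mp amc]; first by rewrite !eqxx.
  by apply/orP; right; apply/IHp; exists m.
Qed.

Lemma middle_of_three (m1 m2 m3 : nat) : m1 != m2 -> m1 != m3 -> m2 != m3 ->
  [|| (m1 < m2 < m3) || (m3 < m2 < m1), (m2 < m1 < m3) || (m3 < m1 < m2)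
    | (m1 < m3 < m2) || (m2 < m3 < m1)].
Proof. lia. Qed.

Section DeletedEdge.
Variables (T : finType) (e : rel T).

Definition del_edge (a b : T) : rel T :=
  fun x y => e x y && ~~ ((x == a) && (y == b) || (x == b) && (y == a)).

Lemma path_del_edgeE (a b x : T) (p : seq T) :
  path (del_edge a b) x p =
  path e x p && ~~ (((a, b) \in zip (x :: p) p) || ((b, a) \in zip (x :: p) p)).
Proof.
elim: p x => [|y p IHp] x //=; rewrite IHp !in_cons !xpair_eqE /del_edge.
rewrite (eq_sym a) (eq_sym b) (eq_sym b) (eq_sym a).
by case: (e x y); case: (path e y p); case: (x == a); case: (y == b);
  case: (x == b); case: (y == a); case: (_ \in _); case: (_ \in _).
Qed.

Lemma link_EC (l : {set T}) (a c : T) : link_E e l a c -> link_E e l c a.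
Proof. by case=> x [y [-> [p [pxy ac]]]]; exists x, y; split; last exists p; tauto. Qed.

Lemma onVpath_end {x y z : T} : onVpath e x y z -> onVpath e x y y.
Proof.
by case=> p [pxy _]; exists p; case/and3P: (pxy) => _ /eqP {2}<- _; rewrite mem_last.
Qed.

Lemma onEpath_onVpath {x y a c : T} : onEpath e x y a c -> onVpath e x y a.
Proof.
case=> p [pxy ac]; exists p; split=> //.
by case: ac => /(mem_zip_nth x)[m mp [ha hc]];
  [rewrite ha | rewrite hc]; apply: mem_nth; rewrite /= ltnS ?(ltnW mp).
Qed.

Hypothesis e_sym : symmetric e.

Lemma del_edge_sym (a b : T) : symmetric (del_edge a b).
Proof.
move=> x y; rewrite /del_edge e_sym; congr (_ && ~~ _).
by case: (x == a); case: (y == b); case: (x == b); case: (y == a).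
Qed.

Lemma onVpath_connect {f g x y z : T} :
  ~ onEpath e x y f g -> onVpath e x y z -> connect (del_edge f g) x z.
Proof.
move=> noE [p [pxy zp]]; apply: path_connect zp.
rewrite path_del_edgeE; case/and3P: (pxy) => -> _ _ /=.
by apply/negP => /orP fgp; apply: noE; exists p; split.
Qed.

Lemma link_V_connect (l : {set T}) (z a c f g : T) :
  link_V e l z -> link_E e l a c -> ~ link_E e l f g ->
  connect (del_edge f g) z a.
Proof.
have Csym := sym_connect_sym (del_edge_sym f g).
move=> [x [y [-> xyz]]] [x' [y' [ll' x'y'a]]] noE.
have noE' (x0 y0 : T) : [set x; y] = [set x0; y0] -> ~ onEpath e x0 y0 f g.
  by move=> l0 fg; apply: noE; exists x0, y0.
have zx : connect (del_edge f g) z x.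
  by rewrite Csym; apply: (onVpath_connect _ xyz); apply: noE'.
have xy : connect (del_edge f g) x y.
  by apply: (onVpath_connect _ (onVpath_end xyz)); apply: noE'.
have zx' : connect (del_edge f g) z x'.
  have : x' \in [set x; y] by rewrite ll' set21.
  by case/set2P=> ->; last apply: connect_trans xy.
apply: connect_trans zx' _; apply: (onVpath_connect _ (onEpath_onVpath x'y'a)).
exact: noE'.
Qed.

End DeletedEdge.

Lemma minimal_cover_private_edge (T : finType) (e : rel T) (u l : {set T})
    (Fu : {set {set T}}) :
  covered_by e (fun l => l \in Fu) u ->
  (forall Fu' : {set {set T}}, Fu' \proper Fu -> ~ covered_by e (fun l => l \in Fu') u) ->
  l \in Fu -> exists a c, [/\ link_E e u a c, link_E e l a c &
    forall l', l' \in Fu -> l' != l -> ~ link_E e l' a c].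
Proof.
move=> cov min lFu; apply: NNPP => noPriv; apply: (min _ (properD1 lFu)) => a c uac.
have [l' [l'Fu l'ac]] := cov a c uac.
case: (eqVneq l' l) => [l'l | l'l]; last by exists l'; rewrite in_setD1 l'l.
subst l'; apply: NNPP => noOther; apply: noPriv; exists a, c; split=> // l'' l''Fu l''l l''ac.
by apply: noOther; exists l''; rewrite in_setD1 l''l.
Qed.

Section Tree.
Variables (T : finType) (e : rel T).
Hypothesis e_tree : is_tree e.

Let e_sym : symmetric e. Proof. by case: e_tree. Qed.

Lemma tpath_uniq (x y : T) (p q : seq T) : tpath e x y p -> tpath e x y q -> p = q.
Proof. by case: e_tree => _ _ /(_ x y)[p0 [_ uniq_p0]] /uniq_p0<- /uniq_p0<-. Qed.

Lemma tpath_cut (x y a c : T) (p : seq T) : tpath e x y p ->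
  ((a, c) \in zip (x :: p) p) || ((c, a) \in zip (x :: p) p) ->
  ~~ connect (del_edge e a c) x y.
Proof.
move=> pxy acp; apply/negP => /connectP[q qdel y_q]; move: pxy; rewrite y_q.
case/shortenP: qdel => q' q'del uq' _ pxq'.
have q'xq' : tpath e x (last x q') q'.
  by rewrite /tpath eqxx uq' !andbT; apply: sub_path q'del => ? ? /andP[].
by move: q'del; rewrite path_del_edgeE -(tpath_uniq pxq' q'xq') acp andbF.
Qed.

Lemma link_cut (x y a c : T) : link_E e [set x; y] a c -> ~~ connect (del_edge e a c) x y.
Proof.
have Csym := sym_connect_sym (del_edge_sym e_sym a c).
case=> x' [y' [ll' [p [px'y' /orP acp]]]]; apply: contra (tpath_cut px'y' acp) => xy.
have /set2P x'xy : x' \in [set x; y] by rewrite ll' set21.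
have /set2P y'xy : y' \in [set x; y] by rewrite ll' set22.
by case: x'xy y'xy => -> [] ->; rewrite // Csym.
Qed.

Section TreePath.
Variables (t b : T) (p : seq T).
Hypothesis tp : tpath e t b p.
Local Notation vtx m := (nth t (t :: p) m).

Lemma tpath_separates (i j k : nat) : i <= j < k -> k <= size p ->
  ~~ connect (del_edge e (vtx j) (vtx j.+1)) (vtx i) (vtx k).
Proof.
move=> /andP[ij jk] kp; case/and3P: (tp) => pe /eqP p_b up.
have step m : m < size p -> m != j -> del_edge e (vtx j) (vtx j.+1) (vtx m) (vtx m.+1).
  move=> mp mj; apply/andP; split; first exact: (pathP t pe).
  rewrite !nth_uniq //=; lia.
have vb : vtx (size p) = b by rewrite -p_b (nth_last t (t :: p)).
have jp : (vtx j, vtx j.+1) \in zip (t :: p) p.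
  by apply/(mem_zip_nth t); exists j; first exact: leq_trans jk kp.
have := tpath_cut tp (a := vtx j) (c := vtx j.+1); rewrite jp => /(_ isT).
apply: contra => ik; rewrite -vb.
apply: connect_trans (connect_nth (x0 := t) (s := t :: p) (leq0n i) _) _ => [m mi|].
  by apply: step; lia.
by apply: connect_trans ik (connect_nth kp _) => m km; apply: step; lia.
Qed.

Lemma link_edge_index (a c : T) : link_E e [set t; b] a c ->
  exists2 m, m < size p & forall l, link_E e l a c <-> link_E e l (vtx m) (vtx m.+1).
Proof.
move=> /link_cut tb_cut.
have : ((a, c) \in zip (t :: p) p) || ((c, a) \in zip (t :: p) p).
  apply: contraNT tb_cut => noac; case/and3P: tp => pe /eqP <- _.
  by apply: (path_connect (p := p)); rewrite ?mem_last // path_del_edgeE pe noac.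
case/orP => /(mem_zip_nth t)[m mp [-> ->]]; exists m => // l.
by split; apply: link_EC.
Qed.

Variable Fu : {set {set T}}.

Definition private_edge (l : {set T}) (m : nat) : Prop :=
  [/\ m < size p, link_E e l (vtx m) (vtx m.+1) &
      forall l', l' \in Fu -> l' != l -> ~ link_E e l' (vtx m) (vtx m.+1)].

Lemma exists_private_edge (l : {set T}) :
  covered_by e (fun l => l \in Fu) [set t; b] ->
  (forall Fu' : {set {set T}}, Fu' \proper Fu ->
     ~ covered_by e (fun l => l \in Fu') [set t; b]) ->
  l \in Fu -> exists m, private_edge l m.
Proof.
move=> cov min lFu; have [a [c [tbac lac priv]]] := minimal_cover_private_edge cov min lFu.
have [m mp acm] := link_edge_index tbac; exists m; split=> //; first by apply/acm.
by move=> l' l'Fu l'l /acm; apply: priv.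
Qed.

Lemma private_edge_inj (l l' : {set T}) (m : nat) :
  l \in Fu -> private_edge l m -> private_edge l' m -> l = l'.
Proof. by move=> lFu [_ lm _] [_ _ priv']; case: (eqVneq l l') => // /(priv' l lFu). Qed.

Lemma private_edges_not_nested (li lj lk : {set T}) (i j k : nat) (z : T) :
  (i < j < k) || (k < j < i) -> li \in Fu -> lk \in Fu -> li != lj -> lk != lj ->
  private_edge li i -> private_edge lj j -> private_edge lk k ->
  link_V e li z -> link_V e lk z -> False.
Proof.
wlog ijk : li lk i k / i < j < k.
  move=> gen /orP[ijk | kji] *; [apply: (gen li lk i k) | apply: (gen lk li k i)];
    by rewrite ?ijk ?kji ?orbT.
move=> _ liFu lkFu lilj lklj [_ li_i _] [_ _ privj] [kp lk_k _] zli zlk.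
have zi := link_V_connect e_sym zli li_i (privj _ liFu lilj).
have zk := link_V_connect e_sym zlk lk_k (privj _ lkFu lklj).
have ijk' : i <= j < k by case/andP: ijk => /ltnW -> ->.
apply: (negP (tpath_separates ijk' (ltnW kp))).
by apply: connect_trans zk; rewrite (sym_connect_sym (del_edge_sym e_sym _ _)).
Qed.

Lemma private_edges_two_thin (z : T) (l1 l2 l3 : {set T}) (m1 m2 m3 : nat) :
  l1 \in Fu -> l2 \in Fu -> l3 \in Fu -> l1 != l2 -> l1 != l3 -> l2 != l3 ->
  private_edge l1 m1 -> private_edge l2 m2 -> private_edge l3 m3 ->
  ~ [/\ link_V e l1 z, link_V e l2 z & link_V e l3 z].
Proof.
move=> l1Fu l2Fu l3Fu l12 l13 l23 p1 p2 p3 [z1 z2 z3].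
have neq l l' m m' :
    l \in Fu -> l != l' -> private_edge l m -> private_edge l' m' -> m != m'.
  move=> lFu ll' pm pm'; apply: contra_neq ll' => mm'.
  by rewrite mm' in pm; apply: private_edge_inj pm pm'.
have := middle_of_three (neq _ _ _ _ l1Fu l12 p1 p2) (neq _ _ _ _ l1Fu l13 p1 p3)
  (neq _ _ _ _ l2Fu l23 p2 p3).
case/or3P => mid.
- by apply: (private_edges_not_nested mid l1Fu l3Fu l12 _ p1 p2 p3 z1 z3); rewrite eq_sym.
- by apply: (private_edges_not_nested mid l2Fu l3Fu _ _ p2 p1 p3 z2 z3); rewrite eq_sym.
- exact: (private_edges_not_nested mid l1Fu l2Fu l13 l23 p1 p3 p2 z1 z2).
Qed.

End TreePath.
End Tree.

Theorem lemma11 (T : finType) (e : rel T) (r : T) (L F : {set {set T}})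
  (t b v : T) (Fu : {set {set T}}) :
  is_tree e -> is_link_set L -> wtap_solution e L F ->
  [set t; b] \in L -> t != b -> ancestor e r t b ->
  is_vu e r F t [set t; b] v ->
  is_Fu e r F [set t; b] v Fu ->
  two_thin e Fu.
Proof.
move=> tree _ _ _ _ _ _ [_ cov min] z l1 l2 l3 l1Fu l2Fu l3Fu l12 l13 l23.
have [p tp] : exists p, tpath e t b p by case: tree => _ _ /(_ t b)[p []]; exists p.
have [m1 p1] := exists_private_edge tree tp cov min l1Fu.
have [m2 p2] := exists_private_edge tree tp cov min l2Fu.
have [m3 p3] := exists_private_edge tree tp cov min l3Fu.
exact: (private_edges_two_thin tree tp l1Fu l2Fu l3Fu l12 l13 l23 p1 p2 p3).
Qed.
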